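(* Let $p\ge2$, $\mathcal K>0$, let $a\colon\mathbb{R}^{Nn}\to\mathbb{R}^{Nn}$ be $C^1$ and let $\omega\colon[0,\infty)\to[0,\infty)$ be bounded with $\lim_{s\to\infty}\omega(s)=0$ and $|Da(\xi)-Db(\xi)|\le\omega(|\xi|)(1+|\xi|)^{p-2}$ for all $\xi$, where $b(\xi)=\mathcal K|\xi|^{p-2}\xi$. For $\epsilon>0$ let $K_\epsilon\ge1$ (depending on $\epsilon$ and $\omega$) be such that $\omega(s)\le\epsilon$ for all $s\ge K_\epsilon$. There exists $c=c(p)$ such that: whenever $\delta\ge0$ and $A\in\mathbb{R}^{Nn}$ satisfy $$|A|+\delta\ge\frac{8\|\omega\|_\infty K_\epsilon}{\epsilon},$$ then for every $\xi\in\mathbb{R}^{Nn}$ $$|a(A)-a(\xi)-[b(A)-b(\xi)]|\le c\,\epsilon\,(|\xi-A|+\delta)\big(1+|A|^2+|\xi-A|^2\big)^{\frac{p-2}2}.$$ *)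

From HB Require Import structures.
From mathcomp Require Import all_boot all_order all_algebra.
From mathcomp Require Import all_classical all_reals all_analysis.
Set Implicit Arguments. Unset Strict Implicit. Unset Printing Implicit Defensive.
Import Order.TTheory GRing.Theory Num.Theory.
Import numFieldNormedType.Exports.
Local Open Scope ring_scope.
Local Open Scope classical_set_scope.

(* Points of R^{Nn} are represented as N x n real matrices. *)
Definition enorm (R : realType) (N n : nat) (A : 'M[R]_(N, n)) : R :=
  Num.sqrt (\sum_(i < N) \sum_(j < n) A i j ^+ 2).

Definition bfun (R : realType) (N n : nat) (p K : R) (xi : 'M[R]_(N, n))
  : 'M[R]_(N, n) := (K * (enorm xi `^ (p - 2))) *: xi.

Definition opnorm_le (R : realType) (N n : nat)
  (L : 'M[R]_(N, n) -> 'M[R]_(N, n)) (M : R) : Prop :=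
  forall h, enorm (L h) <= M * enorm h.

(* a is C^1: differentiable everywhere with continuous derivative
   (continuity of xi |-> Da(xi) tested on every direction h, equivalent
   in finite dimension). *)
Definition C1 (R : realType) (N n : nat) (a : 'M[R]_(N, n) -> 'M[R]_(N, n)) : Prop :=
  (forall x, differentiable a x) /\
  (forall h : 'M[R]_(N, n), continuous (fun x => ('d a x : 'M[R]_(N, n) -> 'M[R]_(N, n)) h)).

Definition supnorm (R : realType) (omega : R -> R) : R :=
  sup [set omega s | s in [set s : R | 0 <= s]].

From HB Require Import structures.
From mathcomp Require Import all_boot all_order all_algebra.
From mathcomp Require Import all_classical all_reals all_analysis.
From mathcomp Require Import ring lra.
Import Order.TTheory GRing.Theory Num.Theory.
Import numFieldNormedType.Exports.
Local Open Scope ring_scope.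
Local Open Scope classical_set_scope.
Set Implicit Arguments. Unset Strict Implicit. Unset Printing Implicit Defensive.

(* Write F := a - b, e := F A - F xi and u t := xi + t (A - xi). The function
   g t := <F (u t), e> increases by |e|^2 on [0, 1], and the hypothesis on Da - Db
   bounds g' t by omega(|u t|) (1 + |u t|)^(p-2) |A - xi| |e| <= omega(|u t|) |A - xi| C |e|,
   where C := 3^((p-2)/2) (1 + |A|^2 + |A - xi|^2)^((p-2)/2) since |u t| <= |A| + |A - xi|.
   If omega(|u t0|) > eps for some t0, then |u t0| < K_eps and ||omega||_oo > eps;
   hence |A| < K_eps + |A - xi|, and the lower bound on |A| + delta yields
   4 ||omega||_oo K_eps <= eps (|A - xi| + delta). Moreover omega(|u t|) <= eps as
   soon as |t - t0| >= 2 K_eps / |A - xi|, so the mean value inequality on the three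
   resulting pieces of [0, 1] gives |e|^2 <= 2 eps (|A - xi| + delta) C |e|. *)

Lemma discriminant_le (R : realFieldType) (a b c : R) :
  0 <= b -> (forall t, 0 <= a - 2 * t * c + t ^+ 2 * b) -> c ^+ 2 <= a * b.
Proof.
move=> b_ge0 quad_ge0.
have [b0|b_neq0] := eqVneq b 0.
  subst b; rewrite mulr0; have [->|c_neq0] := eqVneq c 0; first by rewrite expr0n.
  have := quad_ge0 ((a + 1) / (2 * c)).
  have -> : a - 2 * ((a + 1) / (2 * c)) * c + ((a + 1) / (2 * c)) ^+ 2 * 0 = -1.
    by field.
  lra.
have b_gt0 : 0 < b by rewrite lt_def b_neq0 b_ge0.
have := quad_ge0 (c / b).
have -> : a - 2 * (c / b) * c + (c / b) ^+ 2 * b = a - c ^+ 2 / b by field.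
by rewrite subr_ge0 ler_pdivrMr.
Qed.

Section Frobenius.
Variables (R : realType) (N n : nat).
Implicit Types X Y Z : 'M[R]_(N, n).

Definition dotm X Y : R := \sum_(i < N) \sum_(j < n) X i j * Y i j.

Lemma dotmC X Y : dotm X Y = dotm Y X.
Proof. by apply: eq_bigr => i _; apply: eq_bigr => j _; rewrite mulrC. Qed.

Lemma dotmDl X Y Z : dotm (X + Y) Z = dotm X Z + dotm Y Z.
Proof.
rewrite /dotm -big_split; apply: eq_bigr => i _ /=.
by rewrite -big_split; apply: eq_bigr => j _ /=; rewrite !mxE mulrDl.
Qed.

Lemma dotmZl (s : R) X Z : dotm (s *: X) Z = s * dotm X Z.
Proof.
rewrite /dotm mulr_sumr; apply: eq_bigr => i _ /=.
by rewrite mulr_sumr; apply: eq_bigr => j _ /=; rewrite !mxE mulrA.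
Qed.

Lemma dotmBl X Y Z : dotm (X - Y) Z = dotm X Z - dotm Y Z.
Proof. by rewrite dotmDl -scaleN1r dotmZl mulN1r. Qed.

Lemma dotmDr X Y Z : dotm Z (X + Y) = dotm Z X + dotm Z Y.
Proof. by rewrite dotmC dotmDl !(dotmC Z). Qed.

Lemma dotmZr (s : R) X Z : dotm Z (s *: X) = s * dotm Z X.
Proof. by rewrite dotmC dotmZl dotmC. Qed.

Lemma dotmBr X Y Z : dotm Z (X - Y) = dotm Z X - dotm Z Y.
Proof. by rewrite dotmC dotmBl !(dotmC Z). Qed.

Lemma dotm_ge0 X : 0 <= dotm X X.
Proof. by apply: sumr_ge0 => i _; apply: sumr_ge0 => j _; rewrite -expr2 sqr_ge0. Qed.

Lemma enorm_dotm X : enorm X = Num.sqrt (dotm X X).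
Proof.
by congr Num.sqrt; apply: eq_bigr => i _; apply: eq_bigr => j _; rewrite expr2.
Qed.

Lemma enorm_ge0 X : 0 <= enorm X.
Proof. exact: sqrtr_ge0. Qed.

Lemma enorm_sqr X : enorm X ^+ 2 = dotm X X.
Proof. by rewrite enorm_dotm sqr_sqrtr ?dotm_ge0. Qed.

Lemma dotm_sqr_le X Y : dotm X Y ^+ 2 <= dotm X X * dotm Y Y.
Proof.
apply: discriminant_le => [|t]; first exact: dotm_ge0.
apply: le_trans (dotm_ge0 (X - t *: Y)) _.
rewrite !dotmBl !dotmBr !dotmZl !dotmZr (dotmC Y X).
by rewrite le_eqVlt; apply/orP; left; apply/eqP; ring.
Qed.

Lemma dotm_le_enorm X Y : dotm X Y <= enorm X * enorm Y.
Proof.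
rewrite !enorm_dotm -sqrtrM ?dotm_ge0 //.
apply: le_trans (ler_norm _) _; rewrite -sqrtr_sqr.
exact/ler_wsqrtr/dotm_sqr_le.
Qed.

Lemma enormD X Y : enorm (X + Y) <= enorm X + enorm Y.
Proof.
have := enorm_ge0 (X + Y); have := enorm_ge0 X; have := enorm_ge0 Y.
have : enorm (X + Y) ^+ 2 <= (enorm X + enorm Y) ^+ 2.
  rewrite sqrrD !enorm_sqr dotmDl !dotmDr (dotmC Y X).
  have := dotm_le_enorm X Y; lra.
nra.
Qed.

Lemma enormZ (s : R) X : enorm (s *: X) = `|s| * enorm X.
Proof.
by rewrite !enorm_dotm dotmZl dotmZr mulrA -expr2 sqrtrM ?sqr_ge0 // sqrtr_sqr.
Qed.

Lemma enormN X : enorm (- X) = enorm X.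
Proof. by rewrite -scaleN1r enormZ normrN1 mul1r. Qed.

Lemma enorm_distC X Y : enorm (X - Y) = enorm (Y - X).
Proof. by rewrite -opprB enormN. Qed.

Lemma enorm_le_dist X Y : enorm X <= enorm Y + enorm (X - Y).
Proof. by rewrite -{1}(subrKC Y X) enormD. Qed.

Lemma enorm_segmentB X Y (s t : R) :
  enorm ((X + s *: Y) - (X + t *: Y)) = `|s - t| * enorm Y.
Proof. by rewrite opprD addrACA subrr add0r -scalerBl enormZ. Qed.

Lemma enorm_segment_le X Y (t : R) : 0 <= t <= 1 ->
  enorm (X + t *: (Y - X)) <= enorm Y + enorm (Y - X).
Proof.
move=> /andP[t_ge0 t_le1].
have := enorm_le_dist (X + t *: (Y - X)) (X + 1 *: (Y - X)).
rewrite enorm_segmentB scale1r subrKC distrC ger0_norm ?subr_ge0 //.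
have : (1 - t) * enorm (Y - X) <= enorm (Y - X) by rewrite ler_piMl ?enorm_ge0 //; lra.
lra.
Qed.

Lemma entry_le_enorm X i j : `|X i j| <= enorm X.
Proof.
rewrite -sqrtr_sqr enorm_dotm; apply: ler_wsqrtr.
rewrite /dotm (bigD1 i) //= (bigD1 j) //= -addrA -expr2 lerDl.
have sqr_entry_ge0 k l : 0 <= X k l * X k l by rewrite -expr2 sqr_ge0.
by apply: addr_ge0; apply: sumr_ge0 => k _; rewrite ?sumr_ge0.
Qed.

(* [`|X|] is the max-entry norm [mx_norm] of the normed module of matrices,
   which carries the topology used by [differentiable]. *)
Lemma norm_le_enorm X : `|X| <= enorm X.
Proof.
rewrite (_ : `|X| = mx_norm X) // mx_normrE.
by apply: bigmax_le => [|ij _]; [exact: enorm_ge0 | exact: entry_le_enorm].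
Qed.

Lemma enorm_le_norm X : enorm X <= Num.sqrt (N%:R * n%:R) * `|X|.
Proof.
rewrite -(ger0_norm (normr_ge0 X)) -sqrtr_sqr -sqrtrM ?mulr_ge0 // enorm_dotm.
apply/ler_wsqrtr/(le_trans (_ : _ <= \sum_(i < N) \sum_(j < n) `|X| ^+ 2)).
  apply: ler_sum => i _; apply: ler_sum => j _; rewrite -expr2 -real_normK ?num_real //.
  apply: lerXn2r; rewrite ?nnegrE ?normr_ge0 //.
  rewrite (_ : `|X| = mx_norm X) // mx_normrE.
  exact: (le_bigmax _ (fun ij : 'I_N * 'I_n => `|X ij.1 ij.2|) (i, j)).
rewrite !sumr_const !card_ord -mulrnA.
by rewrite -[_ *+ (n * N)]mulr_natl natrM (mulrC n%:R).
Qed.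

End Frobenius.

Section FrobeniusCalculus.
Variables (R : realType) (N n : nat).
Implicit Types (X : 'M[R]_(N, n)) (f g : 'M[R]_(N, n) -> 'M[R]_(N, n)).

Lemma differentiable_dotm f g X :
  differentiable f X -> differentiable g X ->
  differentiable (fun Y => dotm (f Y) (g Y)) X.
Proof.
move=> df dg.
have -> : (fun Y => dotm (f Y) (g Y)) =
    \sum_(i < N) \sum_(j < n) ((fun Y => f Y i j) * (fun Y => g Y i j)).
  by apply: funext => Y; rewrite /dotm fct_sumE; apply: eq_bigr => i _; rewrite fct_sumE.
apply: differentiable_sum => i; apply: differentiable_sum => j.
by apply: differentiableM; apply: differentiable_comp (differentiable_coord _ i j).
Qed.

Lemma differentiable_scale_self (k : 'M[R]_(N, n) -> R) X :
  differentiable k X -> differentiable (fun Y => k Y *: Y) X.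
Proof.
move=> dk.
have -> : (fun Y => k Y *: Y) =
    \sum_(i < N) \sum_(j < n) (fun Y => (k Y * Y i j) *: delta_mx i j).
  apply: funext => Y; rewrite fct_sumE {2}[Y]matrix_sum_delta scaler_sumr.
  apply: eq_bigr => i _; rewrite fct_sumE scaler_sumr.
  by apply: eq_bigr => j _; rewrite scalerA.
apply: differentiable_sum => i; apply: differentiable_sum => j.
apply: (@differentiableZl _ _ _ (k * (fun Y => Y i j))).
exact/differentiableM/differentiable_coord.
Qed.

Lemma diff_dotml (e X : 'M[R]_(N, n)) :
  'd (fun Y => dotm Y e) X = (fun Y => dotm Y e) :> ('M[R]_(N, n) -> R).
Proof.
have dotml_linear : linear (fun Y => dotm Y e) by move=> s Y Z; rewrite dotmDl dotmZl.
pose dotmL : {linear 'M[R]_(N, n) -> R} :=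
  HB.pack (fun Y => dotm Y e) (GRing.isLinear.Build _ _ _ _ _ dotml_linear).
apply: (@diff_lin _ _ _ dotmL) => Y.
by apply/differentiable_continuous/differentiable_dotm => //; exact: differentiable_cst.
Qed.

Lemma is_derive_dotm_segment f (xi h e : 'M[R]_(N, n)) (t : R) :
  differentiable f (xi + t *: h) ->
  is_derive t 1 (fun s => dotm (f (xi + s *: h)) e) (dotm ('d f (xi + t *: h) h) e).
Proof.
move=> df.
pose u := cst xi + *:%R^~ h : R -> 'M[R]_(N, n).
have du : is_diff t u (0 + *:%R^~ h) by apply: is_diffD.
have dfu : differentiable (f \o u) t by apply: differentiable_comp.
have ddotm Y : differentiable (fun Y => dotm Y e) Y.
  by apply: differentiable_dotm => //; exact: differentiable_cst.
have dg : differentiable ((fun Y => dotm Y e) \o (f \o u)) t.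
  exact: differentiable_comp.
suff <- : 'D_1 ((fun Y => dotm Y e) \o (f \o u)) t = dotm ('d f (xi + t *: h) h) e.
  exact/derivableP/diff_derivable.
rewrite deriveE // diff_comp // diff_dotml diff_comp //= diff_val /=.
by rewrite !fctE add0r scale1r.
Qed.

End FrobeniusCalculus.

Section Bfun.
Variables (R : realType) (N n : nat) (p K : R).
Hypothesis K_gt0 : 0 < K.
Implicit Types X : 'M[R]_(N, n).

Lemma bfunE X : bfun p K X = (K * dotm X X `^ ((p - 2) / 2)) *: X.
Proof. by rewrite /bfun enorm_dotm -powR12_sqrt ?dotm_ge0 // -powRrM (mulrC 2^-1). Qed.

Lemma enorm_bfun X : enorm (bfun p K X) = K * enorm X `^ (p - 2) * enorm X.
Proof. by rewrite /bfun enormZ ger0_norm // mulr_ge0 ?powR_ge0 ?ltW. Qed.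

Lemma enorm_bfun_le (eps : R) X : 2 < p -> 0 < eps ->
  enorm X <= (eps / K) `^ (p - 2)^-1 -> enorm (bfun p K X) <= eps * enorm X.
Proof.
move=> p_gt2 eps_gt0 X_small; rewrite enorm_bfun ler_wpM2r ?enorm_ge0 //.
rewrite -ler_pdivlMl // mulrC.
apply: le_trans (ge0_ler_powR _ _ _ X_small) _; rewrite ?nnegrE ?enorm_ge0 ?powR_ge0 //.
  by rewrite subr_ge0 ltW.
rewrite -powRrM mulVf ?powRr1 //; first by rewrite divr_ge0 ?ltW.
by rewrite subr_eq0 gt_eqF.
Qed.

(* At 0 the factor [|X|^(p-2)] need not be differentiable (p < 4), but for p > 2
   the map b is o(X) there. *)
Lemma differentiable_bfun0 : 2 < p -> differentiable (bfun p K) (0 : 'M[R]_(N, n)).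
Proof.
move=> p_gt2.
have zero_linear : linear (fun _ : 'M[R]_(N, n) => 0 : 'M[R]_(N, n)).
  by move=> ? ? ?; rewrite scaler0 addr0.
pose zeroL : {linear 'M[R]_(N, n) -> 'M[R]_(N, n)} :=
  HB.pack (fun _ : 'M[R]_(N, n) => 0 : 'M[R]_(N, n)) (GRing.isLinear.Build _ _ _ _ _ zero_linear).
have zeroL_cont : continuous zeroL by move=> ?; apply: cst_continuous.
suff bfun_littleo : bfun p K \o shift 0 = cst (bfun p K 0) + zeroL +o_ (0 : 'M[R]_(N, n)) id.
  by apply/diff_locallyP; rewrite (diff_unique zeroL_cont bfun_littleo).
apply/eqaddoP => eps eps_gt0.
pose C := Num.sqrt (N%:R * n%:R : R).
have C_ge0 : 0 <= C by exact: sqrtr_ge0.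
pose r := (eps / (C + 1) / K) `^ (p - 2)^-1.
have r_gt0 : 0 < r by rewrite powR_gt0 // !divr_gt0 //; lra.
have rC_gt0 : 0 < r / (C + 1) by rewrite divr_gt0 //; lra.
apply: filterS (nbhs0_lt rC_gt0) => X X_small /=.
rewrite !fctE /= addr0 /bfun scaler0 !addr0 subr0.
have enorm_X : enorm X <= C * `|X| := enorm_le_norm X.
apply: le_trans (norm_le_enorm _) _.
apply: le_trans (enorm_bfun_le (eps := eps / (C + 1)) p_gt2 _ _) _.
- by rewrite divr_gt0 //; lra.
- apply: (le_trans enorm_X); move: X_small; rewrite ltr_pdivlMr -/r; last lra.
  by have := normr_ge0 X; nra.
- have : eps / (C + 1) * C <= eps by rewrite mulrAC ler_pdivrMr; nra.
  have : 0 <= eps / (C + 1) by rewrite divr_ge0 ?ltW //; lra.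
  by have := normr_ge0 X; nra.
Qed.

Lemma differentiable_bfun X : 2 <= p -> differentiable (bfun p K) X.
Proof.
move=> p_ge2.
have bfun_scale : bfun p K = fun Y : 'M[R]_(N, n) => (K * dotm Y Y `^ ((p - 2) / 2)) *: Y.
  by apply: funext => Y; rewrite bfunE.
have [p2|p_gt2] := eqVneq p 2.
  rewrite bfun_scale p2 subrr mul0r; apply: differentiable_scale_self.
  under eq_fun do rewrite powRr0 mulr1.
  exact: differentiable_cst.
have {}p_gt2 : 2 < p by rewrite lt_def p_gt2.
have [->|X_neq0] := eqVneq X 0; first exact: differentiable_bfun0.
have X_gt0 : 0 < enorm X by apply: lt_le_trans (norm_le_enorm X); rewrite normr_gt0.
have XX_gt0 : 0 < dotm X X by rewrite -enorm_sqr exprn_gt0.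
rewrite bfun_scale; apply: differentiable_scale_self.
apply: differentiableM; first exact: differentiable_cst.
have -> : (fun Y : 'M[R]_(N, n) => dotm Y Y `^ ((p - 2) / 2)) =
    (@powR R ^~ ((p - 2) / 2)) \o (fun Y => dotm Y Y) by [].
apply: differentiable_comp.
  exact: differentiable_dotm.
by apply/derivable1_diffP/derivable_powR; rewrite in_itv /= XX_gt0.
Qed.

End Bfun.

Section MeanValue.
Variables (R : realType) (g g' : R -> R).
Hypothesis g_derive : forall t : R, is_derive t (1 : R) g (g' t).

Lemma mean_value_le (s1 s2 M : R) : s1 <= s2 ->
  (forall t, s1 < t < s2 -> g' t <= M) -> g s2 - g s1 <= M * (s2 - s1).
Proof.
rewrite le_eqVlt => /predU1P[<- _|s12 g'_le]; first by rewrite !subrr mulr0.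
have g_cont : continuous g.
  move=> t; apply/differentiable_continuous/derivable1_diffP.
  exact: (@ex_derive _ _ _ _ _ _ _ (g_derive t)).
have [c c_in ->] := MVT s12 (fun t _ => g_derive t) (continuous_subspaceT g_cont).
by rewrite ler_pM2r ?subr_gt0 //; apply: g'_le; move: c_in; rewrite in_itv.
Qed.

Lemma mean_value_le_split (t0 r Mfar Mnear : R) :
  0 <= t0 <= 1 -> 0 <= r -> 0 <= Mfar -> 0 <= Mnear ->
  (forall t, 0 < t < 1 -> g' t <= Mnear) ->
  (forall t, 0 < t < 1 -> r <= `|t - t0| -> g' t <= Mfar) ->
  g 1 - g 0 <= Mfar + 2 * r * Mnear.
Proof.
move=> /andP[t0_ge0 t0_le1] r_ge0 Mfar_ge0 Mnear_ge0 g'_near g'_far.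
pose t1 := Num.max 0 (t0 - r); pose t2 := Num.min 1 (t0 + r).
have t1_ge0 : 0 <= t1 by rewrite le_max lexx.
have t12 : t1 <= t2 by rewrite ge_max !le_min; apply/andP; split; apply/andP; split; lra.
have t2_le1 : t2 <= 1 by rewrite ge_min lexx.
have t12_le : t2 - t1 <= 2 * r.
  have : t2 <= t0 + r by rewrite ge_min lexx orbT.
  have : t0 - r <= t1 by rewrite le_max lexx orbT.
  lra.
have left_piece : g t1 - g 0 <= Mfar * (t1 - 0).
  apply: mean_value_le t1_ge0 _ => t /andP[t_gt0 t_lt1].
  apply: g'_far; first by apply/andP; split; lra.
  rewrite ler_normr; apply/orP; right.
  by move: t_lt1; rewrite lt_max => /orP[]; lra.
have middle_piece : g t2 - g t1 <= Mnear * (t2 - t1).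
  apply: mean_value_le t12 _ => t /andP[t_gt1 t_lt2].
  by apply: g'_near; apply/andP; split; lra.
have right_piece : g 1 - g t2 <= Mfar * (1 - t2).
  apply: mean_value_le t2_le1 _ => t /andP[t_gt2 t_lt1].
  apply: g'_far; first by apply/andP; split; lra.
  rewrite ler_normr; apply/orP; left.
  by move: t_gt2; rewrite gt_min => /orP[]; lra.
have : Mnear * (t2 - t1) <= Mnear * (2 * r) by rewrite ler_wpM2l.
have : Mfar * (t2 - t1) >= 0 by rewrite mulr_ge0 // subr_ge0.
lra.
Qed.

End MeanValue.

Lemma one_add_powR_le (R : realType) (p z x y : R) :
  2 <= p -> 0 <= z -> 0 <= x -> 0 <= y -> z <= x + y ->
  (1 + z) `^ (p - 2) <= 3 `^ ((p - 2) / 2) * (1 + x ^+ 2 + y ^+ 2) `^ ((p - 2) / 2).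
Proof.
move=> p_ge2 z_ge0 x_ge0 y_ge0 zxy.
have q_ge0 : 0 <= (p - 2) / 2 by rewrite divr_ge0 //; lra.
apply: (@le_trans _ _ ((1 + x + y) `^ (p - 2))).
  by apply: ge0_ler_powR; rewrite ?nnegrE; lra.
rewrite [X in _ `^ X <= _](_ : p - 2 = 2%:R * ((p - 2) / 2)); last by field.
rewrite powRrM powR_mulrn -?powRM; try nra.
have := sqr_ge0 (1 - x); have := sqr_ge0 (1 - y); have := sqr_ge0 (x - y).
by move=> *; apply: ge0_ler_powR; rewrite ?nnegrE //; nra.
Qed.

Section SegmentEstimate.
Variables (R : realType) (N n : nat) (omega : R -> R) (S eps Keps : R).
Hypotheses (omega_le_S : forall s, 0 <= s -> omega s <= S)
  (omega_le_eps : forall s, Keps <= s -> omega s <= eps)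
  (eps_gt0 : 0 < eps) (Keps_ge0 : 0 <= Keps).

Lemma omega_segment_far_le (xi h : 'M[R]_(N, n)) (t0 t : R) :
  enorm (xi + t0 *: h) < Keps -> 2 * Keps <= `|t - t0| * enorm h ->
  omega (enorm (xi + t *: h)) <= eps.
Proof.
move=> ut0_small far; apply: omega_le_eps.
have : `|t - t0| * enorm h <= enorm (xi + t *: h) + enorm (xi + t0 *: h).
  by rewrite -(enorm_segmentB xi); apply: le_trans (enormD _ _) _; rewrite enormN.
lra.
Qed.

Lemma omega_segment_gt_eps (xi A : 'M[R]_(N, n)) (t0 delta : R) :
  0 <= t0 <= 1 -> eps < omega (enorm (xi + t0 *: (A - xi))) ->
  8 * S * Keps <= eps * (enorm A + delta) ->
  enorm (xi + t0 *: (A - xi)) < Keps /\ 4 * S * Keps <= eps * (enorm (A - xi) + delta).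
Proof.
set L := enorm (A - xi); move=> /andP[t0_ge0 t0_le1] omega_t0 A_large.
have S_gt_eps : eps < S := lt_le_trans omega_t0 (omega_le_S (enorm_ge0 _)).
have ut0_small : enorm (xi + t0 *: (A - xi)) < Keps.
  by rewrite ltNge; apply/negP => /omega_le_eps; rewrite leNgt omega_t0.
split=> //.
have A_near : enorm A < Keps + L.
  have := enorm_le_dist (xi + 1 *: (A - xi)) (xi + t0 *: (A - xi)).
  rewrite enorm_segmentB scale1r subrKC -/L.
  have : `|1 - t0| * L <= L by rewrite ler_piMl ?enorm_ge0 // ger0_norm; lra.
  lra.
have : eps * Keps <= S * Keps by rewrite ler_wpM2r // ltW.
have : eps * enorm A <= eps * (Keps + L) by rewrite ler_pM2l // ltW.
have : 0 <= S * Keps by rewrite mulr_ge0 // (le_trans (ltW eps_gt0) (ltW S_gt_eps)).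
lra.
Qed.

Lemma segment_increment_le (g g' : R -> R) (xi A : 'M[R]_(N, n)) (X delta : R) :
  0 <= X -> 0 <= delta -> 8 * S * Keps <= eps * (enorm A + delta) ->
  (forall t : R, is_derive t (1 : R) g (g' t)) ->
  (forall t, 0 < t < 1 -> g' t <= omega (enorm (xi + t *: (A - xi))) * enorm (A - xi) * X) ->
  g 1 - g 0 <= 2 * eps * (enorm (A - xi) + delta) * X.
Proof.
set L := enorm (A - xi); move=> X_ge0 delta_ge0 A_large g_derive g'_le.
have L_ge0 : 0 <= L := enorm_ge0 _.
have epsLX_le : eps * L * X <= eps * (L + delta) * X.
  by rewrite ler_wpM2r // ler_pM2l //; lra.
have [omega_small|] := pselect (forall t, 0 < t < 1 -> omega (enorm (xi + t *: (A - xi))) <= eps).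
  apply: le_trans (mean_value_le g_derive (M := eps * L * X) ler01 _) _.
    move=> t t01; apply: le_trans (g'_le t t01) _.
    by rewrite ler_wpM2r // ler_wpM2r // omega_small.
  rewrite subr0 mulr1.
  have : 0 <= eps * (L + delta) * X by rewrite !mulr_ge0 ?addr_ge0 // ltW.
  lra.
move=> /existsNP[t0 /not_implyP[/andP[t0_gt0 t0_lt1] /negP]]; rewrite -ltNge => omega_t0.
have t0_01 : 0 <= t0 <= 1 by rewrite !ltW.
have [ut0_small SKeps_small] := omega_segment_gt_eps t0_01 omega_t0 A_large.
have S_ge0 : 0 <= S.
  exact: le_trans (ltW eps_gt0) (ltW (lt_le_trans omega_t0 (omega_le_S (enorm_ge0 _)))).
(* The parameters t with |u t| < Keps lie within r of t0. *)
pose r := 2 * Keps / L.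
have rL : r * L <= 2 * Keps.
  have [->|L_neq0] := eqVneq L 0; first by rewrite mulr0 mulr_ge0.
  by rewrite /r divfK.
apply: le_trans (mean_value_le_split g_derive (t0 := t0) (r := r)
  (Mfar := eps * L * X) (Mnear := S * L * X) t0_01 _ _ _ _ _) _.
- by rewrite /r divr_ge0 // mulr_ge0.
- by rewrite !mulr_ge0 // ltW.
- by rewrite !mulr_ge0.
- move=> t t01; apply: le_trans (g'_le t t01) _.
  by rewrite ler_wpM2r // ler_wpM2r //; apply/omega_le_S/enorm_ge0.
- move=> t t01 far; apply: le_trans (g'_le t t01) _.
  rewrite ler_wpM2r //; have [->|L_neq0] := eqVneq L 0; first by rewrite !mulr0.
  rewrite ler_wpM2r //; apply: omega_segment_far_le ut0_small _.
  by rewrite -(divfK L_neq0 (2 * Keps)) -/r ler_wpM2r.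
- have : 2 * r * (S * L * X) <= eps * (L + delta) * X.
    rewrite (_ : _ * (S * L * X) = 2 * S * X * (r * L)); last by ring.
    apply: le_trans (_ : 2 * S * X * (2 * Keps) <= _).
      by rewrite ler_wpM2l // !mulr_ge0.
    by rewrite (_ : _ * (2 * Keps) = 4 * S * Keps * X) ?ler_wpM2r //; ring.
  lra.
Qed.

End SegmentEstimate.

Section Perturbation.
Variables (R : realType) (N n : nat) (p K : R).
Variables (a : 'M[R]_(N, n) -> 'M[R]_(N, n)) (omega : R -> R).
Hypotheses (p_ge2 : 2 <= p) (K_gt0 : 0 < K) (a_diff : forall X, differentiable a X).
Hypothesis omega_ge0 : forall s, 0 <= s -> 0 <= omega s.
Hypothesis Da_near_Db : forall X, opnorm_le (fun h => 'd a X h - 'd (bfun p K) X h)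
  (omega (enorm X) * (1 + enorm X) `^ (p - 2)).

Local Notation F := (a - bfun p K).

Lemma dotm_diff_perturbation_le (X h e : 'M[R]_(N, n)) :
  dotm ('d F X h) e <= omega (enorm X) * (1 + enorm X) `^ (p - 2) * enorm h * enorm e.
Proof.
rewrite diffB //; last exact: differentiable_bfun.
apply: le_trans (dotm_le_enorm _ _) _.
by rewrite ler_wpM2r ?enorm_ge0 //; apply: Da_near_Db.
Qed.

Lemma differentiable_perturbation X : differentiable F X.
Proof. by apply: differentiableB; [exact: a_diff | exact: differentiable_bfun]. Qed.

Lemma dotm_diff_perturbation_segment_le (xi A e : 'M[R]_(N, n)) (t : R) : 0 <= t <= 1 ->
  dotm ('d F (xi + t *: (A - xi)) (A - xi)) e <=
  omega (enorm (xi + t *: (A - xi))) * enorm (A - xi) *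
  (3 `^ ((p - 2) / 2) * (1 + enorm A ^+ 2 + enorm (A - xi) ^+ 2) `^ ((p - 2) / 2) * enorm e).
Proof.
move=> t01; apply: le_trans (dotm_diff_perturbation_le _ _ _) _.
have := one_add_powR_le p_ge2 (enorm_ge0 _) (enorm_ge0 A) (enorm_ge0 _) (enorm_segment_le xi A t01).
have := omega_ge0 (enorm_ge0 (xi + t *: (A - xi))).
set w := omega _; set P := (1 + _) `^ _; set CQ := _ * _ `^ _ => w_ge0 P_le.
rewrite -mulrA [leRHS](_ : _ = w * CQ * (enorm (A - xi) * enorm e)); last by ring.
by rewrite ler_wpM2r ?mulr_ge0 ?enorm_ge0 // ler_wpM2l.
Qed.

Lemma enorm_perturbation_le (eps Keps S delta : R) (A xi : 'M[R]_(N, n)) :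
  0 < eps -> 0 <= Keps -> (forall s, 0 <= s -> omega s <= S) ->
  (forall s, Keps <= s -> omega s <= eps) ->
  0 <= delta -> 8 * S * Keps <= eps * (enorm A + delta) ->
  enorm (F A - F xi) <= 2 * 3 `^ ((p - 2) / 2) * eps * (enorm (A - xi) + delta)
    * (1 + enorm A ^+ 2 + enorm (A - xi) ^+ 2) `^ ((p - 2) / 2).
Proof.
move=> eps_gt0 Keps_ge0 omega_le_S omega_le_eps delta_ge0 A_large.
set e := F A - F xi; set C := 3 `^ _; set Q := (1 + _ + _) `^ _.
have e_sqr_le : enorm e ^+ 2 <= 2 * eps * (enorm (A - xi) + delta) * (C * Q * enorm e).
  have -> : enorm e ^+ 2 = dotm (F (xi + 1 *: (A - xi))) e - dotm (F (xi + 0 *: (A - xi))) e.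
    by rewrite scale1r scale0r addr0 subrKC -dotmBl enorm_sqr.
  apply: (segment_increment_le omega_le_S omega_le_eps eps_gt0 Keps_ge0
    (g := fun t => dotm (F (xi + t *: (A - xi))) e)) => //.
  - by rewrite !mulr_ge0 ?powR_ge0 ?enorm_ge0.
  - by move=> t; apply/is_derive_dotm_segment/differentiable_perturbation.
  - by move=> t /andP[t_gt0 t_lt1]; apply: dotm_diff_perturbation_segment_le; rewrite !ltW.
have [e0|e_neq0] := eqVneq (enorm e) 0.
  by rewrite e0 !mulr_ge0 ?addr_ge0 ?enorm_ge0 ?powR_ge0 // ltW.
rewrite -(@ler_pM2r _ (enorm e)); last by rewrite lt_def e_neq0 enorm_ge0.
have -> : 2 * C * eps * (enorm (A - xi) + delta) * Q * enorm e =
  2 * eps * (enorm (A - xi) + delta) * (C * Q * enorm e) by ring.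
by rewrite -expr2.
Qed.

End Perturbation.

Theorem lemma3p16 (R : realType) (p : R) (hp : 2 <= p) :
  exists c : R, 0 < c /\
  forall (N n : nat) (K : R) (a : 'M[R]_(N, n) -> 'M[R]_(N, n)) (omega : R -> R),
    0 < K ->
    C1 a ->
    (forall s, 0 <= s -> 0 <= omega s) ->
    (exists M : R, forall s, 0 <= s -> omega s <= M) ->
    omega x @[x --> +oo] --> 0 ->
    (forall xi : 'M[R]_(N, n),
        opnorm_le (fun h => ('d a xi : 'M[R]_(N, n) -> 'M[R]_(N, n)) h
                            - ('d (bfun p K) xi : 'M[R]_(N, n) -> 'M[R]_(N, n)) h)
                  (omega (enorm xi) * (1 + enorm xi) `^ (p - 2))) ->
    forall (eps Keps : R), 0 < eps -> 1 <= Keps ->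
    (forall s, Keps <= s -> omega s <= eps) ->
    forall (delta : R) (A : 'M[R]_(N, n)), 0 <= delta ->
    enorm A + delta >= 8 * supnorm omega * Keps / eps ->
    forall xi : 'M[R]_(N, n),
      enorm (a A - a xi - (bfun p K A - bfun p K xi))
      <= c * eps * (enorm (xi - A) + delta)
           * (1 + enorm A ^+ 2 + enorm (xi - A) ^+ 2) `^ ((p - 2) / 2).
Proof.
exists (2 * 3 `^ ((p - 2) / 2)); split; first by rewrite mulr_gt0 ?powR_gt0.
move=> N n K a omega K_gt0 [a_diff _] omega_ge0 [M omega_le_M] _ Da_near_Db.
move=> eps Keps eps_gt0 Keps_ge1 omega_le_eps delta A delta_ge0 A_large xi.
have omega_le_sup s : 0 <= s -> omega s <= supnorm omega.
  move=> s_ge0; apply: ub_le_sup; last by exists s.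
  by exists M => _ [x x_ge0 <-]; exact: omega_le_M.
have perturbationE : a A - a xi - (bfun p K A - bfun p K xi) =
    (a - bfun p K) A - (a - bfun p K) xi.
  by rewrite /= !opprD !opprK addrACA.
rewrite (enorm_distC xi) perturbationE.
apply: (enorm_perturbation_le hp K_gt0 a_diff omega_ge0 Da_near_Db xi
  eps_gt0 _ omega_le_sup omega_le_eps delta_ge0); first lra.
by move: A_large; rewrite ler_pdivrMr // (mulrC (enorm A + delta)).
Qed.
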